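(* Let $M=\frac32-\sqrt2$. For real $f_1,f_2,y_1,y_2$ put $$\hat A=(1-f_1)(1-y_1)+3(1-f_2)(1-y_2),\quad \hat F_1=\frac{(1-f_1)(1-y_1)}{\hat A},\quad \hat F_2=\frac{(1-f_2)(1-y_2)}{\hat A},$$ and $$\hat\alpha(f_1,f_2,y_1,y_2)=\frac{1}{\frac12-\hat F_1}\left(\frac{(1-\hat F_1)\,y_1(\frac12-y_1)}{1-y_1}+\frac{3\hat F_2\,y_2(\frac12-y_2)}{1-y_2}+12Mf_1\cdot\frac{\hat F_2}{1-f_2}\right).$$ Then for all $f_1,f_2,y_1,y_2\in[0,\frac12]$ such that $\frac1{13}\le f_1\le\frac12$ and $f_1+3f_2=1$, we have $\hat\alpha(f_1,f_2,y_1,y_2)\le\frac{963}{1000}$.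
   Context: In the paper's notation, with $\Phi(x)=\frac{1}{x(\frac12-x)}$, the factor $\frac1{\frac12-\hat F_1}$ is $\Phi(\hat F_1)\hat F_1$ and $y(\frac12-y)=1/\Phi(y)$. Under the hypotheses $0<\hat F_1<\frac12$, so $\hat\alpha$ is well defined. *)

From Stdlib Require Import Reals.
Open Scope R_scope.

Definition M : R := 3/2 - sqrt 2.

Definition Ahat (f1 f2 y1 y2 : R) : R :=
  (1 - f1) * (1 - y1) + 3 * ((1 - f2) * (1 - y2)).

Definition F1hat (f1 f2 y1 y2 : R) : R :=
  (1 - f1) * (1 - y1) / Ahat f1 f2 y1 y2.

Definition F2hat (f1 f2 y1 y2 : R) : R :=
  (1 - f2) * (1 - y2) / Ahat f1 f2 y1 y2.

Definition alphahat (f1 f2 y1 y2 : R) : R :=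
  let F1 := F1hat f1 f2 y1 y2 in
  let F2 := F2hat f1 f2 y1 y2 in
  / (1/2 - F1) *
  ( (1 - F1) * (y1 * (1/2 - y1)) / (1 - y1)
  + 3 * F2 * (y2 * (1/2 - y2)) / (1 - y2)
  + 12 * M * f1 * (F2 / (1 - f2)) ).

From Stdlib Require Import Reals Lra QArith Qreals Qminmax.
Open Scope R_scope.

(* Put u = 1 - y1, v = 1 - y2 and eliminate f1 = 1 - 3 f2.  With b = (1 - f2) v one finds
   c - alphahat = b (P u + 3/u - T) / (3 b - (1 - f1) u), the denominator being positive, where
   P = red_slope c f2 v and T = red_const c f2 v depend on f2 and v only.  By AM-GM,
   P u + 3/u >= 2 sqrt (3 P), so it suffices that T <= 0 or T^2 <= 12 P on the rectangle
   1/6 <= f2 <= 4/13, 1/2 <= v <= 1.  For c = 963/1000 this holds with a margin of only about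
   5e-4 (near f2 = 1/6, v = 0.65), so it is verified by bisecting the rectangle into rational
   boxes, evaluated with vm_compute.  On a box, T is bounded above by monotonicity in f2 and by
   the tangent of the convex function 6 v + 3/v at the midpoint, and P is bounded below by
   monotonicity. *)

Definition red_slope (c f2 v : R) : R := 6 - 3 * c * f2 / ((1 - f2) * v).

Definition red_const (c f2 v : R) : R :=
  18 - 3 * c + 24 * M * (1 - 3 * f2) / (1 - f2) - (6 * v + 3 / v).

Lemma alphahat_le_of_reduced (c f1 f2 y1 y2 : R) :
  0 <= f2 -> 0 < f1 -> f1 + 3 * f2 = 1 -> 0 <= y1 <= 1/2 -> 0 <= y2 <= 1/2 ->
  red_const c f2 (1 - y2) <= red_slope c f2 (1 - y2) * (1 - y1) + 3 / (1 - y1) ->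
  alphahat f1 f2 y1 y2 <= c.
Proof.
  intros Hf2 Hf1 Hsum Hy1 Hy2 Hred.
  set (u := 1 - y1) in *. set (v := 1 - y2) in *.
  set (b := (1 - f2) * v).
  set (d := 3 * b - (1 - f1) * u).
  assert (Hb : 0 < b) by (unfold b, v; nra).
  assert (Hd : 0 < d) by (unfold d, b, u, v; nra).
  assert (E : c - alphahat f1 f2 y1 y2
              = b * (red_slope c f2 v * u + 3 / u - red_const c f2 v) / d).
  { unfold alphahat, F1hat, F2hat, Ahat, red_const, red_slope, d, b, u, v.
    replace f1 with (1 - 3 * f2) by lra.
    field; repeat split; nra. }
  assert (0 <= b * (red_slope c f2 v * u + 3 / u - red_const c f2 v) / d).
  { apply Rmult_le_pos; [apply Rmult_le_pos; lra |].
    left; apply Rinv_0_lt_compat; exact Hd. }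
  lra.
Qed.

Lemma le_am_gm (p q u t : R) :
  0 < p -> 0 < q -> 0 < u -> t <= 0 \/ t * t <= 4 * p * q -> t <= p * u + q / u.
Proof.
  intros Hp Hq Hu Ht.
  set (s := p * u + q / u).
  assert (Hs : 0 < s) by (unfold s; assert (0 < q / u) by (apply Rdiv_lt_0_compat; lra); nra).
  assert (Hsq : s * s - 4 * p * q = (p * u - q / u) * (p * u - q / u))
    by (unfold s; field; lra).
  assert (4 * p * q <= s * s) by (pose proof (Rle_0_sqr (p * u - q / u)); unfold Rsqr in *; lra).
  destruct Ht as [Ht | Ht]; [lra |].
  destruct (Rle_or_lt t s) as [Hts | Hst]; [exact Hts |].
  assert (s * s < t * t) by nra.
  lra.
Qed.

Definition am_gm_dominates (c f2 v : R) : Prop :=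
  red_const c f2 v <= 0 \/ red_const c f2 v * red_const c f2 v <= 12 * red_slope c f2 v.

Lemma div_one_sub_monotone (x y : R) :
  0 <= x <= y -> y < 1 -> x / (1 - x) <= y / (1 - y).
Proof.
  intros Hx Hy.
  replace (x / (1 - x)) with (/ (1 - x) - 1) by (field; lra).
  replace (y / (1 - y)) with (/ (1 - y) - 1) by (field; lra).
  assert (/ (1 - x) <= / (1 - y)) by (apply Rinv_le_contravar; lra).
  lra.
Qed.

Lemma red_slope_antitone (c f f' v v' : R) :
  0 <= c -> 0 <= f <= f' -> f' < 1 -> 0 < v' <= v -> red_slope c f' v' <= red_slope c f v.
Proof.
  intros Hc Hf Hf' Hv. unfold red_slope.
  replace (3 * c * f / ((1 - f) * v)) with (3 * c * (f / (1 - f)) * / v) by (field; lra).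
  replace (3 * c * f' / ((1 - f') * v')) with (3 * c * (f' / (1 - f')) * / v')
    by (field; lra).
  assert (f / (1 - f) <= f' / (1 - f')) by (apply div_one_sub_monotone; lra).
  assert (0 <= f / (1 - f)).
  { unfold Rdiv; apply Rmult_le_pos; [lra | left; apply Rinv_0_lt_compat; lra]. }
  assert (/ v <= / v') by (apply Rinv_le_contravar; lra).
  assert (0 < / v) by (apply Rinv_0_lt_compat; lra).
  assert (f / (1 - f) * / v <= f' / (1 - f') * / v') by nra.
  nra.
Qed.

Lemma red_slope_pos (c f2 v : R) :
  0 <= c <= 1 -> 0 <= f2 <= 1/3 -> 1/2 <= v -> 0 < red_slope c f2 v.
Proof.
  intros Hc Hf Hv.
  apply Rlt_le_trans with (red_slope c (1/3) (1/2)).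
  - unfold red_slope. lra.
  - apply red_slope_antitone; lra.
Qed.

(* 1393/985 is a continued-fraction convergent of sqrt 2, from below. *)
Lemma M_bounds : 0 <= M <= 169/1970.
Proof.
  unfold M.
  assert (1393/985 <= sqrt 2 <= 3/2).
  { split; [rewrite <- (sqrt_pow2 (1393/985)) by lra | rewrite <- (sqrt_pow2 (3/2)) by lra];
      apply sqrt_le_1_alt; lra. }
  lra.
Qed.

Lemma inv_tangent_le (w v : R) : 0 < w -> 0 < v -> 2 / w - v / (w * w) <= 1 / v.
Proof.
  intros Hw Hv.
  assert (E : 1 / v - (2 / w - v / (w * w)) = (v - w) * (v - w) * / (v * (w * w)))
    by (field; lra).
  assert (0 <= (v - w) * (v - w) * / (v * (w * w))).
  { apply Rmult_le_pos; [apply Rle_0_sqr | left; apply Rinv_0_lt_compat].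
    repeat apply Rmult_lt_0_compat; assumption. }
  lra.
Qed.

Lemma Rmin_affine_le (a b x y v : R) :
  x <= v <= y -> Rmin (a * x + b) (a * y + b) <= a * v + b.
Proof.
  intros Hv. destruct (Rle_or_lt 0 a).
  - apply Rle_trans with (a * x + b); [apply Rmin_l | nra].
  - apply Rle_trans with (a * y + b); [apply Rmin_r | nra].
Qed.

Lemma one_sub_3_div_antitone (x y : R) :
  x <= y < 1 -> (1 - 3 * y) / (1 - y) <= (1 - 3 * x) / (1 - x).
Proof.
  intros Hxy.
  replace ((1 - 3 * y) / (1 - y)) with (3 - 2 / (1 - y)) by (field; lra).
  replace ((1 - 3 * x) / (1 - x)) with (3 - 2 / (1 - x)) by (field; lra).
  assert (/ (1 - x) <= / (1 - y)) by (apply Rinv_le_contravar; lra).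
  unfold Rdiv. lra.
Qed.

Lemma Q2R_lit (z : Z) (p : positive) : Q2R (z # p) = IZR z / IZR (Zpos p).
Proof. reflexivity. Qed.

Lemma Q2R_div_nz (x y : Q) : Q2R y <> 0 -> Q2R (x / y) = Q2R x / Q2R y.
Proof.
  intros Hy. apply Q2R_div. intros E. apply Hy.
  rewrite (Qeq_eqR _ _ E), Q2R_lit. field.
Qed.

Lemma Q2R_min (x y : Q) : Q2R (Qmin x y) = Rmin (Q2R x) (Q2R y).
Proof.
  destruct (Q.min_spec x y) as [[Hxy E] | [Hyx E]]; rewrite (Qeq_eqR _ _ E).
  - rewrite Rmin_left; [reflexivity | left; apply Qlt_Rlt, Hxy].
  - rewrite Rmin_right; [reflexivity | apply Qle_Rle, Hyx].
Qed.

Lemma Qle_bool_false_lt (x y : Q) : Qle_bool x y = false -> Q2R y < Q2R x.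
Proof.
  intros H. apply Qlt_Rlt, Qnot_le_lt. intros Hxy.
  apply Qle_bool_iff in Hxy. congruence.
Qed.

Definition cQ : Q := 963 # 1000.

(* The tangent line at w of the convex function v |-> 6 v + 3/v. *)
Definition tangentQ (w v : Q) : Q := ((6 - 3 / (w * w)) * v + 6 / w)%Q.

Definition tangent_lower (va vb : Q) : Q :=
  let w := ((va + vb) / 2)%Q in Qmin (tangentQ w va) (tangentQ w vb).

Definition red_const_upper (fa va vb : Q) : Q :=
  (18 - 3 * cQ + 24 * (169 # 1970) * (1 - 3 * fa) / (1 - fa) - tangent_lower va vb)%Q.

Definition red_slope_lower (fb va : Q) : Q := (6 - 3 * cQ * fb / ((1 - fb) * va))%Q.

Definition box_ok (fa fb va vb : Q) : bool :=
  let T := red_const_upper fa va vb in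
  negb (Qle_bool va 0) && negb (Qle_bool 1 fb) &&
  (Qle_bool T 0 || Qle_bool (T * T) (12 * red_slope_lower fb va)).

Lemma tangent_lower_le (va vb : Q) (v : R) :
  0 < Q2R va + Q2R vb -> Q2R va <= v <= Q2R vb -> 0 < v ->
  Q2R (tangent_lower va vb) <= 6 * v + 3 / v.
Proof.
  intros Hw Hv Hv0. unfold tangent_lower.
  set (w := ((va + vb) / 2)%Q).
  assert (Ew : Q2R w = (Q2R va + Q2R vb) / 2).
  { unfold w. rewrite Q2R_div_nz, Q2R_plus, Q2R_lit; [field | rewrite Q2R_lit; lra]. }
  assert (Hw0 : 0 < Q2R w) by lra.
  assert (Et : forall x, Q2R (tangentQ w x) = (6 - 3 / (Q2R w * Q2R w)) * Q2R x + 6 / Q2R w).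
  { intros x. unfold tangentQ.
    rewrite Q2R_plus, Q2R_mult, Q2R_minus, !Q2R_div_nz, Q2R_mult, !Q2R_lit; try lra.
    rewrite Q2R_mult; nra. }
  rewrite Q2R_min, !Et.
  apply Rle_trans with ((6 - 3 / (Q2R w * Q2R w)) * v + 6 / Q2R w).
  - apply Rmin_affine_le; exact Hv.
  - pose proof (inv_tangent_le (Q2R w) v Hw0 Hv0).
    unfold Rdiv in *. lra.
Qed.

Lemma red_const_le_upper (fa va vb : Q) (f2 v : R) :
  Q2R fa <= f2 <= 1/3 -> 0 < Q2R va + Q2R vb -> Q2R va <= v <= Q2R vb -> 0 < v ->
  red_const (963/1000) f2 v <= Q2R (red_const_upper fa va vb).
Proof.
  intros Hf Hw Hv Hv0.
  assert (E : Q2R (red_const_upper fa va vb)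
              = 18 - 3 * (963/1000) + 24 * (169/1970) * (1 - 3 * Q2R fa) / (1 - Q2R fa)
                - Q2R (tangent_lower va vb)).
  { unfold red_const_upper, cQ.
    rewrite Q2R_minus, Q2R_plus, Q2R_div_nz, !Q2R_minus, !Q2R_mult, !Q2R_minus, !Q2R_mult,
      !Q2R_lit.
    - field. lra.
    - rewrite Q2R_minus, Q2R_lit. lra. }
  rewrite E. unfold red_const.
  pose proof (tangent_lower_le va vb v Hw Hv Hv0).
  pose proof M_bounds.
  assert (Hratio : (1 - 3 * f2) / (1 - f2) <= (1 - 3 * Q2R fa) / (1 - Q2R fa))
    by (apply one_sub_3_div_antitone; lra).
  assert (0 <= (1 - 3 * f2) / (1 - f2)).
  { unfold Rdiv; apply Rmult_le_pos; [lra | left; apply Rinv_0_lt_compat; lra]. }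
  assert (M * ((1 - 3 * f2) / (1 - f2)) <= 169/1970 * ((1 - 3 * Q2R fa) / (1 - Q2R fa)))
    by nra.
  unfold Rdiv in *. lra.
Qed.

Lemma Q2R_red_slope_lower (fb va : Q) :
  Q2R fb < 1 -> 0 < Q2R va ->
  Q2R (red_slope_lower fb va) = red_slope (963/1000) (Q2R fb) (Q2R va).
Proof.
  intros Hfb Hva. unfold red_slope_lower, red_slope, cQ.
  rewrite Q2R_minus, Q2R_div_nz, !Q2R_mult, Q2R_minus, !Q2R_lit.
  - field. split; lra.
  - rewrite Q2R_mult, Q2R_minus, Q2R_lit. nra.
Qed.

Lemma box_ok_sound (fa fb va vb : Q) (f2 v : R) :
  box_ok fa fb va vb = true -> Q2R fa <= f2 <= Q2R fb -> Q2R va <= v <= Q2R vb ->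
  0 <= f2 <= 1/3 -> am_gm_dominates (963/1000) f2 v.
Proof.
  unfold box_ok. intros H Hf Hv Hf2.
  apply andb_prop in H as [H Hok]. apply andb_prop in H as [Hva Hfb].
  apply Bool.negb_true_iff, Qle_bool_false_lt in Hva, Hfb.
  rewrite Q2R_lit in Hva, Hfb.
  set (T := red_const_upper fa va vb) in Hok.
  assert (HT : red_const (963/1000) f2 v <= Q2R T)
    by (apply red_const_le_upper; lra).
  assert (HP : Q2R (red_slope_lower fb va) <= red_slope (963/1000) f2 v).
  { rewrite Q2R_red_slope_lower by lra. apply red_slope_antitone; lra. }
  unfold am_gm_dominates.
  destruct (Rle_or_lt (red_const (963/1000) f2 v) 0) as [Hneg | Hpos]; [left; exact Hneg | right].
  apply orb_prop in Hok as [Hok | Hok]; apply Qle_bool_iff, Qle_Rle in Hok.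
  - rewrite Q2R_lit in Hok. lra.
  - rewrite !Q2R_mult, Q2R_lit in Hok. nra.
Qed.

(* Nested [if]s rather than [&&]: vm_compute evaluates both arguments of [andb]. *)
Fixpoint boxes_ok (n : nat) (fa fb va vb : Q) : bool :=
  if box_ok fa fb va vb then true else
  match n with
  | O => false
  | S n =>
    if Qle_bool (4 * (fb - fa)) (vb - va) then
      let m := Qred ((va + vb) / 2) in
      if boxes_ok n fa fb va m then boxes_ok n fa fb m vb else false
    else
      let m := Qred ((fa + fb) / 2) in
      if boxes_ok n fa m va vb then boxes_ok n m fb va vb else false
  end.

Lemma boxes_ok_sound (n : nat) : forall (fa fb va vb : Q) (f2 v : R),
  boxes_ok n fa fb va vb = true -> Q2R fa <= f2 <= Q2R fb -> Q2R va <= v <= Q2R vb ->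
  0 <= f2 <= 1/3 -> am_gm_dominates (963/1000) f2 v.
Proof.
  induction n as [|n IH]; intros fa fb va vb f2 v H Hf Hv Hf2; cbn [boxes_ok] in H;
    destruct (box_ok fa fb va vb) eqn:Ebox; try (eapply box_ok_sound; eassumption).
  - discriminate.
  - destruct (Qle_bool _ _) in H.
    + set (m := Qred _) in H.
      destruct (boxes_ok n fa fb va m) eqn:Elow; [|discriminate].
      destruct (Rle_or_lt v (Q2R m)).
      * apply (IH fa fb va m); auto; lra.
      * apply (IH fa fb m vb); auto; lra.
    + set (m := Qred _) in H.
      destruct (boxes_ok n fa m va vb) eqn:Elow; [|discriminate].
      destruct (Rle_or_lt f2 (Q2R m)).
      * apply (IH fa m va vb); auto; lra.
      * apply (IH m fb va vb); auto; lra.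
Qed.

Lemma am_gm_dominates_on_range (f2 v : R) :
  1/6 <= f2 <= 4/13 -> 1/2 <= v <= 1 -> am_gm_dominates (963/1000) f2 v.
Proof.
  intros Hf Hv.
  assert (Hcert : boxes_ok 23 (1 # 6) (4 # 13) (1 # 2) 1 = true) by (vm_compute; reflexivity).
  apply (boxes_ok_sound _ _ _ _ _ _ _ Hcert); rewrite ?Q2R_lit; lra.
Qed.

Theorem lemma20 (f1 f2 y1 y2 : R) :
  0 <= f1 <= 1/2 -> 0 <= f2 <= 1/2 -> 0 <= y1 <= 1/2 -> 0 <= y2 <= 1/2 ->
  1/13 <= f1 <= 1/2 -> f1 + 3 * f2 = 1 ->
  alphahat f1 f2 y1 y2 <= 963/1000.
Proof.
  intros Hf1 Hf2 Hy1 Hy2 Hf1_lb Hsum.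
  apply alphahat_le_of_reduced; try lra.
  assert (Hdom : am_gm_dominates (963/1000) f2 (1 - y2))
    by (apply am_gm_dominates_on_range; lra).
  apply le_am_gm; try lra.
  - apply red_slope_pos; lra.
  - destruct Hdom; [left | right]; lra.
Qed.
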